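(* Let $M$ be a sparse paving matroid. Then $M$ is cyclically orderable if and only if, for every nonempty subset $A$ of $E(M)$, $r(M)\,|A|\leq r(A)\,|E(M)|$.
   Context: A matroid $M$ of rank $r$ is sparse paving if every nonspanning circuit is a hyperplane; equivalently, every $r$-subset of $E(M)$ is a basis or a circuit-hyperplane. A matroid $M$ is cyclically orderable if there is a cyclic ordering $(a_1,a_2,\dots,a_n)$ of $E(M)$ in which every set of $r(M)$ cyclically-consecutive elements is a basis of $M$. Here $r(A)$ denotes the rank of $A$ in $M$. *)

(* Matroids on a finite ground set E(M) = [set: T],
   given by their independent sets. *)
From mathcomp Require Import all_boot.
Set Implicit Arguments. Unset Strict Implicit. Unset Printing Implicit Defensive.

Section Matroid.
Variable T : finType.
Variable indep : {set T} -> bool.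

Definition is_matroid : Prop :=
  [/\ indep set0,
      (forall A B : {set T}, A \subset B -> indep B -> indep A) &
      (forall A B : {set T}, indep A -> indep B -> #|A| < #|B| ->
         exists2 x, x \in B :\: A & indep (x |: A))].

Definition rank (A : {set T}) : nat :=
  \max_(B : {set T} | (B \subset A) && indep B) #|B|.

Definition mrank : nat := rank [set: T].

Definition is_basis (B : {set T}) : bool := indep B && (#|B| == mrank).

Definition is_circuit (C : {set T}) : bool :=
  ~~ indep C && [forall x in C, indep (C :\ x)].

Definition is_flat (X : {set T}) : bool :=
  [forall e in ~: X, rank X < rank (e |: X)].

Definition is_hyperplane (X : {set T}) : bool :=
  is_flat X && (rank X == mrank.-1).

Definition sparse_paving : Prop :=
  forall C : {set T}, is_circuit C -> rank C < mrank -> is_hyperplane C.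

Definition cyclically_orderable : Prop :=
  exists s : seq T, [/\ uniq s, (forall x : T, x \in s) &
    forall i, i < size s -> is_basis [set x in take mrank (rot i s)]].

End Matroid.

From mathcomp Require Import all_boot zify.
Set Implicit Arguments. Unset Strict Implicit. Unset Printing Implicit Defensive.

(* In a sparse paving matroid of rank r on n elements the dependent r-sets are
   the circuit-hyperplanes, and no two of them share r-1 elements.  The density
   condition can only fail at such a set A, where r(A) = r-1, and there it reads
   r^2 <= (r-1) n, that is 1 < r and r + 2 <= n.  These bounds are necessary for
   a cyclic ordering, because for r <= 1 or n <= r+1 every r-set is a window.
   Conversely, under these bounds a cyclic ordering avoiding the dependent
   r-sets is built greedily, one element at a time, keeping every window that
   the prefix already determines (as a set) independent.  Two windows differing
   in one element are not both dependent, so each newly determined window rules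
   out at most one candidate, and with three candidates left one can extend.
   The last two steps are secured by arranging, right after the first r-1
   elements, that no remaining element completes them to a dependent set. *)

Lemma sq_leq_predn_mul r n : 0 < r -> (r * r <= r.-1 * n) = (1 < r) && (r + 2 <= n).
Proof. by move=> r_gt0; apply/idP/andP => [le | [r_gt1 r_card]]; [split | ]; nia. Qed.

Lemma take_rcons (X : Type) (s : seq X) y k : k <= size s -> take k (rcons s y) = take k s.
Proof. by move=> le_k; rewrite -cats1 takel_cat. Qed.

Lemma rot_rot_lt (X : Type) (s : seq X) m k : 0 < size s ->
  exists2 i, i < size s & rot m (rot k s) = rot i s.
Proof.
move=> s_gt0; rewrite rot_rot_add.
case: ltngtP (leq_rot_add k m s) => // [lt_i _ | -> _]; first by exists (rot_add s k m).
by exists 0; rewrite ?rot_size ?rot0.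
Qed.

Lemma set_rcons (T : finType) (s : seq T) y : [set x in rcons s y] = y |: [set x in s].
Proof. by apply/setP => x; rewrite !inE mem_rcons in_cons. Qed.

Lemma set_cat (T : finType) (s1 s2 : seq T) :
  [set x in s1 ++ s2] = [set x in s1] :|: [set x in s2].
Proof. by apply/setP => x; rewrite !inE mem_cat. Qed.

Section SparsePaving.
Variables (T : finType) (indep : {set T} -> bool).
Hypotheses (matroidM : is_matroid indep) (sparseM : sparse_paving indep).
Local Notation rk := (rank indep).
Local Notation r := (mrank indep).
Implicit Types A B S : {set T}.

Lemma indep_set0 : indep set0.
Proof. by case: matroidM. Qed.

Lemma indep_augment A B : indep A -> indep B -> #|A| < #|B| ->
  exists2 x, x \in B :\: A & indep (x |: A).
Proof. by case: matroidM => _ _; apply. Qed.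

Lemma leq_card_rank A B : B \subset A -> indep B -> #|B| <= rk A.
Proof.
move=> sBA iB; rewrite /rank.
by apply: (leq_bigmax_cond (P := fun B => (B \subset A) && indep B)); rewrite sBA.
Qed.

Lemma rank_attained A : exists B, [/\ B \subset A, indep B & #|B| = rk A].
Proof.
have : 0 < #|[pred B : {set T} | (B \subset A) && indep B]|.
  by apply/card_gt0P; exists set0; rewrite inE sub0set indep_set0.
move=> /(eq_bigmax_cond (fun B : {set T} => #|B|)) [B].
by rewrite inE => /andP[sBA iB] eB; exists B.
Qed.

Lemma rank_leq_card A : rk A <= #|A|.
Proof. by apply/bigmax_leqP => B /andP[sBA _]; apply: subset_leq_card. Qed.

Lemma mrank_leq_card : r <= #|T|.
Proof. exact: leq_trans (rank_leq_card _) (max_card _). Qed.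

Lemma dep_card_gt0 A : ~~ indep A -> 0 < #|A|.
Proof. by rewrite card_gt0; apply: contraNneq => ->; apply: indep_set0. Qed.

Lemma rank_indep A : indep A -> rk A = #|A|.
Proof. by move=> iA; apply/eqP; rewrite eqn_leq rank_leq_card leq_card_rank. Qed.

Lemma rank_lt_card A : ~~ indep A -> rk A < #|A|.
Proof.
move=> dA; have [B [sBA iB <-]] := rank_attained A.
rewrite ltn_neqAle subset_leq_card // andbT; apply: contraNneq dA => eBA.
by have /eqP <- : B == A by rewrite eqEcard sBA eBA leqnn.
Qed.

(* A minimal dependent set of size below [r] would be a nonspanning circuit,
   hence a hyperplane of rank [r.-1], which is too large. *)
Lemma indep_card_lt A : #|A| < r -> indep A.
Proof.
elim: {A}#|A| {-2}A (leqnn #|A|) => [|k IHk] A.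
  by rewrite leqn0 cards_eq0 => /eqP-> _; apply: indep_set0.
move=> leAk ltAr; apply/negPn/negP => dA.
have circA : is_circuit indep A.
  rewrite /is_circuit dA; apply/forall_inP => x xA; apply: IHk.
    by move: leAk; rewrite (cardsD1 x) xA.
  by apply: leq_ltn_trans ltAr; apply/subset_leq_card/subD1set.
have ltAA := rank_lt_card dA.
have /andP[_ /eqP rkA] := sparseM circA (leq_trans ltAA (ltnW ltAr)).
lia.
Qed.

Lemma dep_card_mrank_hyperplane A : #|A| = r -> ~~ indep A -> is_hyperplane indep A.
Proof.
move=> cardA dA; apply: sparseM; last by rewrite -cardA rank_lt_card.
rewrite /is_circuit dA; apply/forall_inP => x xA; apply: indep_card_lt.
by rewrite -cardA (cardsD1 x A) xA.
Qed.

(* Two dependent [r]-sets sharing [r.-1] elements: the first is a hyperplane,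
   so adding [y] raises its rank to [r], and augmenting [S] inside the
   resulting [r+1]-set forces [x |: S] or [y |: S] to be independent. *)
Lemma dep_setU1_uniq S x y : x \notin S -> y \notin S -> #|x |: S| = r ->
  ~~ indep (x |: S) -> ~~ indep (y |: S) -> x = y.
Proof.
move=> xS yS cardxS dxS dyS; apply/eqP/negPn/negP => xy.
have cardS : #|S| = r.-1 by move: cardxS; rewrite cardsU1 xS; lia.
have iS : indep S by apply: indep_card_lt; move: cardxS; rewrite cardsU1 xS; lia.
have /andP[/forall_inP flat_xS /eqP rk_xS] := dep_card_mrank_hyperplane cardxS dxS.
have /flat_xS : y \in ~: (x |: S) by rewrite !inE negb_or eq_sym xy.
rewrite rk_xS => rk_yxS.
have [B [sB iB cardB]] := rank_attained (y |: (x |: S)).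
have [|z] := indep_augment iS iB; first lia.
rewrite inE => /andP[zS zB] izS.
have := subsetP sB z zB; rewrite !inE (negbTE zS) orbF => /orP[]/eqP ez.
  by rewrite -ez izS in dyS.
by rewrite -ez izS in dxS.
Qed.

(* A maximal independent subset [B] of [A] would have [r.-1] elements, and two
   elements of [A :\: B] would extend it to dependent [r]-sets sharing [B]. *)
Lemma mrank_leq_rank A : r < #|A| -> r <= rk A.
Proof.
move=> ltrA; rewrite leqNgt; apply/negP => ltAr.
have [B [sBA iB cardB]] := rank_attained A.
have depB x : x \in A :\: B -> ~~ indep (x |: B).
  case/setDP => xA xB; apply/negP => ixB.
  have sxBA : x |: B \subset A by rewrite subUset sub1set xA.
  by have := leq_card_rank sxBA ixB; rewrite cardsU1 xB; lia.
have cardAB : #|A :\: B| = #|A| - #|B| by rewrite cardsD (setIidPr sBA).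
have [x xAB] : exists x, x \in A :\: B by apply/set0Pn; rewrite -card_gt0; lia.
have cardxB : #|x |: B| = r.
  have [/setDP[_ xB] dxB] := (xAB, depB x xAB).
  have : ~~ (#|x |: B| < r) by apply: contra dxB; apply: indep_card_lt.
  by rewrite cardsU1 xB; lia.
have /card_gt1P[y [z [yAB zAB yz]]] : 1 < #|A :\: B|.
  by move: cardxB; rewrite cardsU1 (setDP xAB).2; lia.
have [[_ yB] [_ zB]] := (setDP yAB, setDP zAB).
have cardyB : #|y |: B| = r by move: cardxB; rewrite !cardsU1 yB (setDP xAB).2.
by move/eqP: yz; apply; apply: dep_setU1_uniq yB zB cardyB (depB y yAB) (depB z zAB).
Qed.

Lemma density_iff_dep_bound :
  (forall A, A != set0 -> r * #|A| <= rk A * #|T|) <->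
  (forall A, #|A| = r -> ~~ indep A -> r * r <= r.-1 * #|T|).
Proof.
split=> [dense A cardA depA | dep_ok A A_neq0].
  have A_neq0 : A != set0 by rewrite -card_gt0 dep_card_gt0.
  have /andP[_ /eqP <-] := dep_card_mrank_hyperplane cardA depA.
  by rewrite -{2}cardA; apply: dense.
have [ltAr | leAr] := ltnP #|A| r.
  by rewrite rank_indep ?indep_card_lt // mulnC leq_mul2l mrank_leq_card orbT.
have [lerA | ltAr] := leqP r (rk A); first by rewrite leq_mul ?max_card.
have cardA : #|A| = r.
  by apply/eqP; rewrite eqn_leq leAr andbT leqNgt; apply/negP => /mrank_leq_rank; lia.
have depA : ~~ indep A by apply: contraL ltAr => /rank_indep->; rewrite cardA ltnn.
have /andP[_ /eqP->] := dep_card_mrank_hyperplane cardA depA.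
by rewrite cardA; apply: dep_ok cardA depA.
Qed.

End SparsePaving.

Section CyclicAvoidance.
Variables (T : finType) (r : nat) (bad : {set T} -> bool).
Hypothesis bad_setU1_uniq : forall (S : {set T}) x y,
  x \notin S -> y \notin S -> bad (x |: S) -> bad (y |: S) -> x = y.
Hypotheses (r_gt1 : 1 < r) (r_card : r + 2 <= #|T|).
Local Notation n := #|T|.
Implicit Types (p s : seq T) (Q R S : {set T}).

Lemma card_bad_setU1 S : #|[set y | (y \notin S) && bad (y |: S)]| <= 1.
Proof.
apply/card_le1_eqP => x y; rewrite !inE => /andP[xS bxS] /andP[yS byS].
exact/esym/(bad_setU1_uniq xS yS bxS byS).
Qed.

Lemma card_bad_setD1 R Q : [disjoint R & Q] ->
  #|[set y in R | bad (R :\ y :|: Q)]| <= 1.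
Proof.
move=> dRQ; apply/card_le1_eqP => y z; rewrite !inE => /andP[yR byRQ] /andP[zR bzRQ].
apply/esym/eqP/negPn/negP => yz.
have [yQ zQ] : y \notin Q /\ z \notin Q by rewrite !(disjointFr dRQ).
pose S := R :\ y :\ z :|: Q.
have zS : z \notin S by rewrite !inE eqxx (negbTE zQ).
have yS : y \notin S by rewrite !inE eqxx andbF (negbTE yQ).
have eyS : R :\ y :|: Q = z |: S.
  apply/setP => x; rewrite !inE; case: (x =P z) => [->|_] //.
  by rewrite zR eq_sym yz.
have ezS : R :\ z :|: Q = y |: S.
  apply/setP => x; rewrite !inE; case: (x =P y) => [->|_]; first by rewrite yz yR.
  by case: (x =P z).
rewrite eyS in byRQ; rewrite ezS in bzRQ.
by move: yz; rewrite (bad_setU1_uniq zS yS byRQ bzRQ) eqxx.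
Qed.

Definition rest p := ~: [set x in p].

Definition inner_window p a := [set x in take r (drop a p)].

(* When [n <= a + r], the window at position [a] of any extension of [p] to a
   cyclic ordering is already determined as a set: it consists of the tail
   [drop a p], all elements not yet placed, and a prefix of [p]. *)
Definition outer_window p a :=
  [set x in drop a p] :|: rest p :|: [set x in take (a + r - n) p].

(* [p] is a prefix of the ordering under construction; [admissible p] says that
   no window determined by [p] is bad. *)
Definition admissible p := [/\ uniq p,
  forall a, a + r <= size p -> ~~ bad (inner_window p a) &
  forall a, a <= size p -> n <= a + r -> a < n -> ~~ bad (outer_window p a)].

(* Appending [y] to [p] determines at most one new window of each kind; these
   say that it is bad. *)
Definition completes_inner p y :=
  (r <= (size p).+1) && bad (y |: [set x in drop ((size p).+1 - r) p]).

Definition completes_outer p y := [&& n <= (size p).+1 + r, (size p).+1 < n &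
  bad (rest p :\ y :|: [set x in take ((size p).+1 + r - n) p])].

Definition blocked p := [set y in rest p | completes_inner p y || completes_outer p y].

Lemma in_rest p x : (x \in rest p) = (x \notin p).
Proof. by rewrite !inE. Qed.

Lemma card_rest p : uniq p -> #|rest p| = n - size p.
Proof. by move=> up; rewrite cardsCs setCK cardsE (card_uniqP up). Qed.

Lemma rest_rcons p y : rest (rcons p y) = rest p :\ y.
Proof. by apply/setP => x; rewrite !inE mem_rcons in_cons negb_or. Qed.

Lemma disjoint_rest p Q : Q \subset [set x in p] -> [disjoint rest p & Q].
Proof. by move=> sQp; rewrite disjoint_sym disjoints_subset setCK. Qed.

Lemma inner_window_rcons p y a :
  a + r <= size p -> inner_window (rcons p y) a = inner_window p a.
Proof.
move=> le_ar; rewrite /inner_window drop_rcons; last by lia.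
by rewrite take_rcons // size_drop; lia.
Qed.

Lemma inner_window_rcons_last p y : r <= (size p).+1 ->
  inner_window (rcons p y) ((size p).+1 - r) =
  y |: [set x in drop ((size p).+1 - r) p].
Proof.
move=> le_r; rewrite /inner_window drop_rcons; last by lia.
by rewrite take_oversize ?set_rcons // size_rcons size_drop; lia.
Qed.

Lemma outer_window_rcons p y a : y \notin p -> a <= size p ->
  outer_window (rcons p y) a = outer_window p a.
Proof.
move=> yp le_a; rewrite /outer_window drop_rcons // set_rcons rest_rcons.
rewrite take_rcons; last by lia.
apply/setP => x; rewrite !inE; case: (x =P y) => [->|] //=.
by rewrite (negbTE yp) !orbT.
Qed.

Lemma outer_window_rcons_last p y :
  outer_window (rcons p y) (size p).+1 =
  rest p :\ y :|: [set x in take ((size p).+1 + r - n) p].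
Proof.
rewrite /outer_window rest_rcons take_rcons; last by lia.
by rewrite drop_oversize ?size_rcons // set_nil set0U.
Qed.

Lemma admissible_rcons p y : admissible p -> y \in rest p ->
  ~~ completes_inner p y -> ~~ completes_outer p y -> admissible (rcons p y).
Proof.
case=> up inner_ok outer_ok; rewrite in_rest => yp ci co.
split; first by rewrite rcons_uniq yp.
- move=> a; rewrite size_rcons => le_ar.
  have [lt_ar | ge_ar] := ltnP (a + r) (size p).+1.
    by rewrite inner_window_rcons ?inner_ok.
  have -> : a = (size p).+1 - r by lia.
  by move: ci; rewrite /completes_inner inner_window_rcons_last; lia.
- move=> a; rewrite size_rcons => le_a le_n lt_n.
  have [lt_a | ge_a] := ltnP a (size p).+1.
    by rewrite outer_window_rcons ?outer_ok.
  have -> : a = (size p).+1 by lia.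
  by move: co; rewrite /completes_outer outer_window_rcons_last; lia.
Qed.

Lemma card_completes_inner p :
  #|[set y in rest p | completes_inner p y]| <= 1.
Proof.
apply: leq_trans (card_bad_setU1 [set x in drop ((size p).+1 - r) p]).
apply/subset_leq_card/subsetP => y; rewrite !inE => /andP[yp /andP[_ ->]].
by rewrite andbT; apply: contra yp; apply: mem_drop.
Qed.

Lemma card_completes_outer p :
  #|[set y in rest p | completes_outer p y]| <= 1.
Proof.
set Q := [set x in take ((size p).+1 + r - n) p].
have dRQ : [disjoint rest p & Q].
  by apply/disjoint_rest/subsetP => x; rewrite !inE; apply: mem_take.
apply: leq_trans (card_bad_setD1 dRQ).
by apply/subset_leq_card/subsetP => y; rewrite !inE => /andP[-> /and3P[_ _ ->]].
Qed.

Lemma card_blocked p : #|blocked p| <= 2.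
Proof.
have sub : blocked p \subset
    [set y in rest p | completes_inner p y] :|: [set y in rest p | completes_outer p y].
  by apply/subsetP => y; rewrite !in_set => /andP[-> /orP[] ->]; rewrite ?orbT.
apply: leq_trans (subset_leq_card sub) _; apply: leq_trans (leq_card_setU _ _) _.
by rewrite -addn1 leq_add ?card_completes_inner ?card_completes_outer.
Qed.

Lemma admissible_extend_avoiding p F : admissible p -> #|blocked p :|: F| < #|rest p| ->
  exists2 y, y \notin F & admissible (rcons p y).
Proof.
move=> adm_p lt_card.
have /subsetPn[y yR] : ~~ (rest p \subset blocked p :|: F).
  by apply: contraTN lt_card => /subset_leq_card; rewrite -leqNgt.
move: yR; rewrite in_rest => yp; rewrite /blocked !inE yp /= !negb_or.
by case/andP=> /andP[ci co] yF; exists y => //; apply: admissible_rcons; rewrite ?in_rest.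
Qed.

Definition head_safe p := [forall z in rest p, ~~ bad (z |: [set x in take r.-1 p])].

Lemma head_safe_rcons p y : r.-1 <= size p -> head_safe p -> head_safe (rcons p y).
Proof.
move=> le_r /forall_inP safe; apply/forall_inP => z.
by rewrite rest_rcons take_rcons // => /setD1P[_ /safe].
Qed.

Lemma completes_outer_rest2 p y : uniq p -> #|rest p| = 2 -> head_safe p ->
  y \in rest p -> ~~ completes_outer p y.
Proof.
move=> up rest2 /forall_inP safe yR; have := card_rest up; rewrite rest2 => card_p.
have /cards1P[z ez] : #|rest p :\ y| == 1.
  by move: rest2; rewrite (cardsD1 y (rest p)) yR add1n => -[->].
have /setD1P[_ zR] : z \in rest p :\ y by rewrite ez set11.
rewrite /completes_outer ez (_ : (size p).+1 + r - n = r.-1); last by lia.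
by rewrite (negbTE (safe z zR)) !andbF.
Qed.

Lemma blocked_rest1 p : admissible p -> #|rest p| = 1 -> blocked p = set0.
Proof.
case=> up _ outer_ok rest1; have := card_rest up; rewrite rest1 => card_p.
have /cards1P[y ey] : #|rest p| == 1 by rewrite rest1.
apply/setP => z; rewrite in_set ey in_set1 inE.
have [-> /= | ] := eqVneq z y; last by [].
apply/norP; split; last by rewrite /completes_outer; lia.
rewrite /completes_inner; have -> : (size p).+1 - r = n - r by lia.
have := outer_ok (n - r); rewrite /outer_window ey (_ : n - r + r - n = 0); last by lia.
rewrite take0 set_nil setU0 setUC => ok; apply/nandP; right; apply: ok; lia.
Qed.

Lemma card_blocked_lt_rest p : admissible p -> 0 < #|rest p| ->
  (#|rest p| <= 2 -> head_safe p) -> #|blocked p| < #|rest p|.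
Proof.
move=> adm_p rest_gt0 safe; have [up _ _] := adm_p.
case: (ltngtP #|rest p| 2) => [lt2 | gt2 | rest2].
- by rewrite (blocked_rest1 adm_p) ?cards0 //; lia.
- exact: leq_ltn_trans (card_blocked p) gt2.
have sub : blocked p \subset [set y in rest p | completes_inner p y].
  apply/subsetP => y; rewrite !in_set -!in_rest => /andP[yR /orP[ci | co]]; rewrite yR //.
  by move: co; rewrite (negbTE (completes_outer_rest2 up rest2 (safe _) yR)) // rest2.
by rewrite rest2 (leq_ltn_trans (subset_leq_card sub)) // ltnS card_completes_inner.
Qed.

Lemma admissible_extend p : admissible p -> 0 < #|rest p| ->
  (#|rest p| <= 2 -> head_safe p) -> exists y, admissible (rcons p y).
Proof.
move=> adm_p rest_gt0 safe.
have [|y _ adm_py] := @admissible_extend_avoiding p set0 adm_p; last by exists y.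
by rewrite setU0 card_blocked_lt_rest.
Qed.

Lemma admissible_complete p : admissible p -> r.-1 <= size p -> head_safe p ->
  exists s, admissible s /\ size s = n.
Proof.
move: {2}#|rest p| (erefl #|rest p|) => k.
elim: k p => [|k IHk] p rest_k adm_p le_r safe; have [up _ _] := adm_p.
  exists p; split=> //; have := card_rest up.
  by have := max_card (mem p); rewrite (card_uniqP up); lia.
have [||y adm_py] := admissible_extend adm_p; [by rewrite rest_k | by [] | ].
have [upy _ _] := adm_py.
apply: (IHk (rcons p y)) => //; last exact: head_safe_rcons.
  by move: rest_k; rewrite !card_rest // size_rcons; lia.
by rewrite size_rcons; lia.
Qed.

Lemma admissible_initial m : m <= r.-1 -> exists p, admissible p /\ size p = m.
Proof.
elim: m => [|m IHm] le_m.
  by exists [::]; split=> //; split=> // a; rewrite [size _]/= => *; exfalso; lia.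
have [p [adm_p size_p]] := IHm (ltnW le_m); have [up _ _] := adm_p.
have card_p := card_rest up.
have [||y adm_py] := admissible_extend adm_p; [lia | move=> ?; exfalso; lia | ].
by exists (rcons p y); rewrite size_rcons size_p.
Qed.

(* If some [g] completes the first [r.-1] elements [P] to a bad set, [g] cannot
   be placed last; it is placed at position [r], after a suitable [y]. *)
Section Bridge.
Variables (P : seq T) (g : T).
Hypotheses (adm_P : admissible P) (size_P : size P = r.-1).
Hypotheses (gR : g \in rest P) (bad_gP : bad (g |: [set x in P])).

Let k := (size P).+2 + r - n.

Let F := [set y in rest P :\ g | bad (rest P :\ g :\ y :|: [set x in take k P])].

Lemma bad_head_uniq y : y \in rest P -> bad (y |: [set x in P]) -> y = g.
Proof.
move=> yR b; apply: bad_setU1_uniq b bad_gP; by rewrite -in_setC.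
Qed.

Lemma completes_inner_head y : y \in rest P -> completes_inner P y -> y = g.
Proof.
move=> yR /andP[_]; rewrite size_P (_ : (r.-1).+1 - r = 0) ?drop0; last by lia.
exact: bad_head_uniq.
Qed.

Lemma card_rest_head : #|rest P| = n - r.-1.
Proof. by have [up _ _] := adm_P; rewrite card_rest // size_P. Qed.

Lemma card_bridge_blocked : #|F| <= n - (r + 2).
Proof.
have [n_eq | n_neq] := eqVneq n (r + 2); last first.
  apply: leq_trans (_ : 1 <= _); last by move/eqP: n_neq; lia.
  apply: card_bad_setD1; apply: disjointWl (subD1set _ g) _.
  by apply/disjoint_rest/subsetP => x; rewrite !inE; apply: mem_take.
rewrite n_eq subnn leqn0 cards_eq0; apply/eqP/setP => y; rewrite [y \in F]in_set in_set0.
apply/negbTE/negP => /andP[/setD1P[yg yR]].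
rewrite /k size_P (_ : (r.-1).+2 + r - n = r.-1) ?take_oversize ?size_P //; last by lia.
have : #|rest P :\ g :\ y| == 1.
  move: card_rest_head; rewrite (cardsD1 g (rest P)) gR (cardsD1 y (rest P :\ g)).
  by rewrite in_setD1 yg yR; lia.
case/cards1P => z ez; have /setD1P[zy /setD1P[zg zR]] : z \in rest P :\ g :\ y by rewrite ez set11.
by rewrite ez => /bad_head_uniq => /(_ zR)/eqP; rewrite (negbTE zg).
Qed.

Lemma exists_bridge :
  exists2 y, y != g & admissible (rcons P y) /\ ~~ completes_outer (rcons P y) g.
Proof.
have [|y] := @admissible_extend_avoiding P (g |: F) adm_P.
  have sub : blocked P :|: (g |: F) \subset
      g |: ([set y in rest P | completes_outer P y] :|: F).
    apply/subsetP => y; rewrite inE => /orP[]; last first.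
      by rewrite !in_setU1 in_setU => /orP[-> | ->]; rewrite ?orbT.
    rewrite in_set => /andP[yR /orP[/(completes_inner_head yR)-> | co]].
      by rewrite setU11.
    by rewrite in_setU1 in_setU in_set yR co orbT.
  apply: leq_ltn_trans (subset_leq_card sub) _; rewrite card_rest_head.
  rewrite cardsU1; have := (leq_card_setU [set y in rest P | completes_outer P y] F).1.
  have := card_completes_outer P; have := card_bridge_blocked.
  by case: (g \notin _); lia.
rewrite in_setU1 negb_or => /andP[yg yF] adm_Py; exists y => //; split=> //.
have [/[!rcons_uniq] /andP[yP _] _ _] := adm_Py.
rewrite /completes_outer rest_rcons size_rcons take_rcons; last by lia.
apply: contra yF => /and3P[_ _ b]; rewrite in_set in_setD1 yg in_rest yP /=.
by rewrite (_ : rest P :\ g :\ y = rest P :\ y :\ g) //; apply/setP => x; rewrite !inE andbCA.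
Qed.

Lemma completes_inner_bridge y : y != g -> y \notin P ->
  ~~ completes_inner (rcons P y) g.
Proof.
have [up _ _] := adm_P; move=> yg yP; apply/nandP; right.
case eP: P size_P up yP bad_gP => [|x P'] /=; first by lia.
move=> size_P' /andP[xP' _].
rewrite inE negb_or set_cons => /andP[yx yP'] bad_gxP.
rewrite size_rcons (_ : (size P').+3 - r = 1) /= ?drop0; last by lia.
rewrite set_rcons setUCA; apply/negP => bad_gyP; rewrite setUCA in bad_gxP.
have gP : g \notin P by rewrite -in_rest.
have notS z : z != g -> z \notin P' -> z \notin g |: [set x in P'].
  by move=> zg zP'; rewrite !inE negb_or zg.
move: gP; rewrite eP inE negb_or eq_sym => /andP[xg _].
by move/eqP: yx; apply; apply: bad_setU1_uniq bad_gyP bad_gxP; apply: notS.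
Qed.

End Bridge.

Lemma admissible_head_safe P : admissible P -> size P = r.-1 ->
  exists p, [/\ admissible p, r.-1 <= size p & head_safe p].
Proof.
move=> adm_P size_P.
have take_P : take r.-1 P = P by rewrite take_oversize ?size_P.
have [safe | ] := boolP (head_safe P); first by exists P; rewrite ?size_P.
rewrite /head_safe take_P => /forall_inPn[g gR /negPn bad_gP].
have [y yg [adm_Py co]] := exists_bridge adm_P size_P gR bad_gP.
have [/[!rcons_uniq] /andP[yP _] _ _] := adm_Py.
exists (rcons (rcons P y) g); split.
- apply: admissible_rcons => //; last exact: completes_inner_bridge.
  by rewrite rest_rcons in_setD1 eq_sym yg.
- by rewrite !size_rcons; lia.
apply/forall_inP => z; rewrite !rest_rcons => /setD1P[zg /setD1P[_ zR]].
rewrite !take_rcons ?take_P ?size_rcons ?size_P //.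
by apply: contra zg => /(bad_head_uniq gR bad_gP zR)->.
Qed.

Lemma admissible_windows s : admissible s -> size s = n ->
  forall i, i < n -> ~~ bad [set x in take r (rot i s)].
Proof.
case=> us inner_ok outer_ok size_s i lt_i.
have rest0 : rest s = set0 by apply/eqP; rewrite -cards_eq0 card_rest // size_s subnn.
rewrite /rot; have [le_ir | gt_ir] := leqP (i + r) n.
  by rewrite takel_cat ?inner_ok ?size_s // size_drop size_s; lia.
rewrite take_cat size_drop size_s ifN; last by lia.
rewrite take_takel (_ : r - (n - i) = i + r - n); try lia.
have := outer_ok i; rewrite /outer_window rest0 setU0 set_cat size_s.
by apply; lia.
Qed.

Lemma exists_cyclic_ordering_avoiding : exists s, [/\ uniq s, size s = n &
  forall i, i < n -> ~~ bad [set x in take r (rot i s)]].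
Proof.
have [P [adm_P size_P]] := admissible_initial (leqnn r.-1).
have [p [adm_p le_p safe_p]] := admissible_head_safe adm_P size_P.
have [s [adm_s size_s]] := admissible_complete adm_p le_p safe_p.
by exists s; split=> //; [case: adm_s | apply: admissible_windows].
Qed.

End CyclicAvoidance.

Section CyclicOrderings.
Variables (T : finType) (indep : {set T} -> bool).
Hypotheses (matroidM : is_matroid indep) (sparseM : sparse_paving indep).
Local Notation r := (mrank indep).
Local Notation n := #|T|.
Implicit Types (s : seq T) (A : {set T}).

Lemma size_enumeration s : uniq s -> (forall x, x \in s) -> size s = n.
Proof.
by move=> us alls; rewrite -(card_uniqP us); apply: eq_card => x; rewrite alls.
Qed.

Lemma mem_enumeration s x : uniq s -> size s = n -> x \in s.
Proof.
move=> us size_s; suff /setP/(_ x) : [set x in s] = setT by rewrite !inE.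
by apply/eqP; rewrite eqEcard subsetT cardsT cardsE (card_uniqP us) size_s leqnn.
Qed.

Lemma card_window s i : uniq s -> size s = n -> #|[set x in take r (rot i s)]| = r.
Proof.
move=> us size_s; rewrite cardsE (card_uniqP (take_uniq _ _)) ?rot_uniq //.
by rewrite size_takel // size_rot size_s mrank_leq_card.
Qed.

Lemma window_of_card s A : uniq s -> (forall x, x \in s) -> #|A| = r -> 0 < r ->
  (r <= 1) || (n <= r.+1) -> exists2 i, i < size s & A = [set x in take r (rot i s)].
Proof.
move=> us alls cardA r_gt0 small; have size_s := size_enumeration us alls.
have r_le_n := mrank_leq_card indep.
have [r1 | r_gt1] := eqVneq r 1.
  have /cards1P[y ->] : #|A| == 1 by rewrite cardA r1.
  exists (index y s); first by rewrite index_mem.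
  by rewrite rot_index // r1 /= take0 set_seq1.
have [rn | rn] := eqVneq r n.
  exists 0; first by rewrite size_s; lia.
  have -> : A = setT by apply/eqP; rewrite eqEcard subsetT cardsT cardA rn leqnn.
  by rewrite rot0 take_oversize ?size_s ?rn //; apply/setP => x; rewrite !inE alls.
have /cards1P[y eAy] : #|~: A| == 1.
  (* [cardsCs] elaborates [#|T|] through a different (convertible) instance
     path, which [lia] would otherwise treat as a distinct atom. *)
  by rewrite cardsCs setCK cardA; set N := #|T|; lia.
have [i lt_i rot_i] : exists2 i, i < size s & rot 1 (rot (index y s) s) = rot i s.
  by apply: rot_rot_lt; lia.
exists i => //; rewrite -rot_i rot_index // rot1_cons.
set t := drop _ s ++ take _ s.
have rot_y : rot (index y s) s = y :: t by rewrite rot_index.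
have /andP[yt _] : uniq (y :: t) by rewrite -rot_y rot_uniq.
have size_t : size t = r by have := size_rot (index y s) s; rewrite rot_y /= size_s; lia.
rewrite -cats1 takel_cat ?size_t // take_oversize ?size_t //.
apply/setP => x; rewrite -[A]setCK eAy !inE.
have := alls x; rewrite -(mem_rot (index y s)) rot_y in_cons.
by case: eqP => [-> _ | _ /= ->]; rewrite ?(negbTE yt).
Qed.

Lemma cyclically_orderable_dep_bound A : cyclically_orderable indep ->
  #|A| = r -> ~~ indep A -> 1 < r /\ r + 2 <= n.
Proof.
case=> s [us alls bases] cardA depA.
have r_gt0 : 0 < r by rewrite -cardA (dep_card_gt0 matroidM depA).
have r_le_n := mrank_leq_card indep.
suff : ~~ ((r <= 1) || (n <= r.+1)) by lia.
apply/negP => /(window_of_card us alls cardA r_gt0)[i lt_i eA].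
by move: depA; rewrite eA; case/andP: (bases i lt_i) => ->.
Qed.

Lemma cyclically_orderable_of_dep_bound :
  (forall A, #|A| = r -> ~~ indep A -> 1 < r /\ r + 2 <= n) ->
  cyclically_orderable indep.
Proof.
move=> bounds; pose bad A := (#|A| == r) && ~~ indep A.
suff [s [us size_s ok]] : exists s, [/\ uniq s, size s = n &
    forall i, i < n -> ~~ bad [set x in take r (rot i s)]].
  exists s; split=> // [x | i]; first exact: mem_enumeration.
  rewrite size_s => lt_i; rewrite /is_basis card_window // eqxx andbT.
  by have := ok i lt_i; rewrite /bad card_window // eqxx negbK.
have [A /andP[/eqP cardA depA] | no_bad] := pickP bad; last first.
  by exists (enum T); split=> [||i _]; rewrite ?enum_uniq ?no_bad // -cardT.
have [r_gt1 r_card] := bounds A cardA depA.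
apply: exists_cyclic_ordering_avoiding => // S x y xS yS /andP[/eqP cardxS dxS] /andP[_ dyS].
exact: dep_setU1_uniq cardxS dxS dyS.
Qed.

End CyclicOrderings.

Theorem theorem2p8 (T : finType) (indep : {set T} -> bool) :
  is_matroid indep -> sparse_paving indep ->
  (cyclically_orderable indep <->
   forall A : {set T}, A != set0 ->
     mrank indep * #|A| <= rank indep A * #|T|).
Proof.
move=> matroidM sparseM; rewrite density_iff_dep_bound //.
split=> [orderable A cardA depA | dense].
  have [r_gt1 r_card] := cyclically_orderable_dep_bound matroidM orderable cardA depA.
  by rewrite sq_leq_predn_mul ?r_gt1 ?r_card //; lia.
apply: cyclically_orderable_of_dep_bound => // A cardA depA.
have r_gt0 : 0 < mrank indep by rewrite -cardA (dep_card_gt0 matroidM depA).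
by apply/andP; rewrite -sq_leq_predn_mul //; apply: dense cardA depA.
Qed.
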